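(* Let $\mathcal{B}=(T,\bowtie)$ be a block and $\mathcal S$ a valid schedule of $\mathcal{B}$. For $v\in T$ let $c(v)$ be the number of vertices of a longest directed path in $(T,\mathcal S)$ ending at $v$, let $k=\max_{v\in T}c(v)$, and let $T_i=\{v\in T: c(v)=i\}$ for $i=1,\dots,k$. Then $c$ is a proper vertex coloring of the conflict graph $(T,\bowtie)$, and $(T_1,\dots,T_k)$ is a legal partition of $T$ consisting of $k$ nonempty sets.
   Context: A block consists of a finite set $T$ of transactions with a symmetric irreflexive conflict relation $\bowtie$; its conflict graph is the undirected graph $(T,\bowtie)$. A schedule is a set $\mathcal S\subseteq T\times T$ such that the directed graph $(T,\mathcal S)$ is acyclic; it is valid if for every pair $tx\bowtie tx'$ the graph $(T,\mathcal S)$ contains a directed path from $tx$ to $tx'$ or from $tx'$ to $tx$. A set is conflict-free if no two of its elements conflict; a legal partition of $T$ is an ordered sequence of pairwise disjoint conflict-free sets whose union is $T$. *)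

From mathcomp Require Import all_boot.
Set Implicit Arguments. Unset Strict Implicit. Unset Printing Implicit Defensive.

(* A block: finite set of transactions T (a finType) with a conflict relation. *)
Definition conflict_rel (T : finType) (cf : rel T) : Prop :=
  symmetric cf /\ irreflexive cf.

Definition acyclic (T : finType) (S : rel T) : Prop :=
  forall (x : T) (p : seq T), p != [::] -> path S x p -> last x p != x.

(* Valid: every conflicting pair is joined by a directed path in one direction.
   ([connect S x y] = there is a directed path from x to y; conflicting
   transactions are distinct, so such a path is nonempty.) *)
Definition valid_schedule (T : finType) (cf : rel T) (S : rel T) : Prop :=
  acyclic S /\ forall x y, cf x y -> connect S x y || connect S y x.

Definition dpath (T : finType) (S : rel T) (q : seq T) : bool :=
  if q is x :: p then path S x p else false.

Definition dpath_to (T : finType) (S : rel T) (v : T) (q : seq T) : bool :=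
  dpath S q && (last v q == v).

Definition longest_path_count (T : finType) (S : rel T) (v : T) (n : nat) : Prop :=
  (exists q, dpath_to S v q /\ size q = n) /\
  (forall q, dpath_to S v q -> size q <= n).

Definition conflict_free (T : finType) (cf : rel T) (A : {set T}) : bool :=
  [forall x in A, forall y in A, ~~ cf x y].

Definition legal_partition (T : finType) (cf : rel T) (P : seq {set T}) : Prop :=
  (forall i j, i < j < size P -> [disjoint nth set0 P i & nth set0 P j]) /\
  all (conflict_free cf) P /\
  \bigcup_(A <- P) A = [set: T].

Definition proper_coloring (T : finType) (cf : rel T) (c : T -> nat) : Prop :=
  forall u v, cf u v -> c u != c v.

From mathcomp Require Import all_boot.
From mathcomp Require Import zify.

Set Implicit Arguments.
Unset Strict Implicit.
Unset Printing Implicit Defensive.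

(* Appending a path [u -> ... -> w] to a longest path ending at [u] gives a
   path ending at [w], so [c] strictly increases along every nonempty path;
   as conflicting transactions are joined by such a path, [c] is a proper
   coloring and its classes are conflict-free.  A longest
   path ending at a vertex of maximal color [k] passes through every color
   class: its [i]-th vertex has color at least [i] (by its prefix) and at
   most [i] (by its suffix). *)

Definition color_classes (T : finType) (c : T -> nat) (k : nat) : seq {set T} :=
  [seq [set v | c v == i] | i <- iota 1 k].

Lemma size_color_classes (T : finType) (c : T -> nat) k :
  size (color_classes c k) = k.
Proof. by rewrite size_map size_iota. Qed.

Lemma nth_color_classes (T : finType) (c : T -> nat) k i :
  i < k -> nth set0 (color_classes c k) i = [set v | c v == i.+1].
Proof.
by move=> ik; rewrite (nth_map 0) ?size_iota // nth_iota // add1n.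
Qed.

Lemma color_classes_legal_partition (T : finType) (cf : rel T) (c : T -> nat) k :
  proper_coloring cf c -> (forall v, 0 < c v <= k) ->
  legal_partition cf (color_classes c k).
Proof.
move=> c_proper c_range; split; last split.
- move=> i j /andP [ij]; rewrite size_color_classes => jk.
  rewrite !nth_color_classes //; last exact: ltn_trans jk.
  apply/pred0P => v /=; rewrite !inE.
  by apply/negP => /andP [/eqP -> /eqP []] /eqP; rewrite ltn_eqF.
- apply/allP => _ /mapP [i _ ->]; apply/forallP => x; apply/implyP.
  rewrite inE => /eqP cx; apply/forallP => y; apply/implyP.
  rewrite inE => /eqP cy; apply/negP => /c_proper.
  by rewrite cx cy eqxx.
- apply/setP => v; rewrite inE bigcup_seq; apply/bigcupP.
  exists [set u | c u == c v]; last by rewrite inE.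
  by apply/mapP; exists (c v); rewrite // mem_iota add1n ltnS.
Qed.

Section LongestPathCount.

Variables (T : finType) (S : rel T) (c : T -> nat).
Hypothesis c_longest : forall v, longest_path_count S v (c v).

Lemma longest_path_count_max v q : dpath_to S v q -> size q <= c v.
Proof. exact: (c_longest v).2. Qed.

Lemma longest_path_count_gt0 v : 0 < c v.
Proof. by apply: (longest_path_count_max (q := [:: v])); rewrite /dpath_to eqxx. Qed.

Lemma longest_path_count_path u p :
  path S u p -> c u + size p <= c (last u p).
Proof.
move=> up; have [[[|x q] [+ <-]] _] := c_longest u => //.
rewrite /dpath_to /= => /andP [xq /eqP qu].
rewrite addSn -size_cat; apply: (longest_path_count_max (q := x :: q ++ p)).
by rewrite /dpath_to /= cat_path xq last_cat qu up eqxx.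
Qed.

Lemma longest_path_count_connect u w :
  u != w -> connect S u w -> c u < c w.
Proof.
move=> uw /connectP [[|x p] up wE]; first by rewrite wE eqxx in uw.
by have := longest_path_count_path up; rewrite -wE /=; lia.
Qed.

Lemma longest_path_count_coloring (cf : rel T) :
  irreflexive cf -> (forall x y, cf x y -> connect S x y || connect S y x) ->
  proper_coloring cf c.
Proof.
move=> cf_irr cf_ordered u v uv; have u_neq_v : u != v.
  by apply: contraTneq uv => ->; rewrite cf_irr.
case/orP: (cf_ordered _ _ uv) => [/(longest_path_count_connect u_neq_v)|].
  by rewrite neq_ltn => ->.
rewrite eq_sym in u_neq_v.
by move/(longest_path_count_connect u_neq_v); rewrite neq_ltn orbC => ->.
Qed.

Lemma longest_path_count_levels v i : 0 < i <= c v -> exists w, c w = i.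
Proof.
case/andP=> i_gt0 i_le; have [[[|x p] [+ size_p]] _] := c_longest v => //.
rewrite /dpath_to /= in size_p * => /andP [xp /eqP pv].
move: xp; rewrite -(cat_take_drop i.-1 p) cat_path => /andP [prefix suffix].
exists (last x (take i.-1 p)); apply/eqP; rewrite eqn_leq; apply/andP; split.
  have := longest_path_count_path suffix.
  by rewrite -last_cat cat_take_drop pv size_drop; lia.
have := @longest_path_count_max (last x (take i.-1 p)) (x :: take i.-1 p).
by rewrite /dpath_to /= prefix eqxx size_take_min => /(_ isT); lia.
Qed.

Lemma longest_path_count_classes_nonempty :
  all (fun A : {set T} => A != set0) (color_classes c (\max_v c v)).
Proof.
apply/allP => A /mapP [i]; rewrite mem_iota add1n ltnS => /andP [i_gt0 i_le_max] ->.
have [v i_le_cv] : exists v, i <= c v.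
  apply/existsP; apply: contraTT i_le_max; rewrite negb_exists => /forallP c_lt.
  suff : \max_v c v <= i.-1 by lia.
  by apply/bigmax_leqP => v _; have := c_lt v; lia.
have [w cw] : exists w, c w = i.
  by apply: (longest_path_count_levels (v := v)); rewrite i_gt0.
by apply/set0Pn; exists w; rewrite inE cw.
Qed.

End LongestPathCount.

Theorem lemma3 (T : finType) (cf : rel T) (S : rel T) (c : T -> nat) :
  conflict_rel cf ->
  valid_schedule cf S ->
  (forall v, longest_path_count S v (c v)) ->
  let k := \max_(v : T) c v in
  let Ts := [seq [set v | c v == i] | i <- iota 1 k] in
  proper_coloring cf c /\
  legal_partition cf Ts /\ size Ts = k /\ all (fun A : {set T} => A != set0) Ts.
Proof.
move=> [_ cf_irr] [_ cf_ordered] c_longest k Ts.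
have c_proper := longest_path_count_coloring c_longest cf_irr cf_ordered.
have c_range v : 0 < c v <= k.
  by rewrite (longest_path_count_gt0 c_longest) leq_bigmax.
split=> //; split; first exact: color_classes_legal_partition.
split; first exact: size_color_classes.
exact: longest_path_count_classes_nonempty.
Qed.
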